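(* Let $P\subset\mathbb{R}^d$ with $|P|=n$, let $D=\operatorname{diam}P$ and let $r\in[n]$. Then there is a point $q\in\mathbb{R}^d$ such that the closed ball $B\!\left(q,\frac{3.5D}{\sqrt r}\right)$ intersects the convex hull of at least $r^{-r}\binom nr$ of the $r$-element subsets of $P$.
   Context: $B(q,\rho)$ is the closed Euclidean ball of centre $q$ and radius $\rho$; $\operatorname{diam}$ is the Euclidean diameter. *)

From HB Require Import structures.
From mathcomp Require Import all_boot all_order all_algebra.
From mathcomp Require Export reals.
Set Implicit Arguments. Unset Strict Implicit. Unset Printing Implicit Defensive.
Import Order.TTheory GRing.Theory Num.Theory.
Local Open Scope ring_scope.

Definition enorm (R : realType) (d : nat) (v : 'rV[R]_d) : R :=
  Num.sqrt (\sum_(i < d) v 0 i ^+ 2).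
Definition edist (R : realType) (d : nat) (x y : 'rV[R]_d) : R := enorm (x - y).

Definition cball (R : realType) (d : nat) (q : 'rV[R]_d) (rho : R) (x : 'rV[R]_d) : Prop :=
  edist x q <= rho.

Definition diam (R : realType) (d n : nat) (P : 'I_n -> 'rV[R]_d) : R :=
  \big[Num.max/0]_(i < n) \big[Num.max/0]_(j < n) edist (P i) (P j).

Definition in_conv_hull (R : realType) (d n : nat) (P : 'I_n -> 'rV[R]_d)
  (S : {set 'I_n}) (x : 'rV[R]_d) : Prop :=
  exists w : 'I_n -> R,
    [/\ forall i, 0 <= w i, forall i, i \notin S -> w i = 0,
        \sum_(i < n) w i = 1 & x = \sum_(i < n) w i *: P i].

(* Let mu be the centroid of P and, for each of the n^r maps t : [r] -> [n], let
   c_t be the centroid of the points P (t k).  Expanding the square, the mean of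
   |c_t - mu|^2 over all maps is 1/r times the mean of |P i - mu|^2, hence at most
   D^2/r.  By Markov's inequality, for c >= sqrt 2 at most a fraction 1/c^2 <= 1/2
   of the c_t lie outside B(mu, c D / sqrt r); when r <= c^2 none of them do,
   as every c_t is within D of mu.
   Since C(n,r) <= n^r / r!, at least C(n,r) of the c_t lie in the ball.  Each such
   c_t is in the hull of any r-set containing the range of t, and an r-set contains
   the range of at most r^r maps. *)
From mathcomp Require Import all_boot all_order all_algebra reals.
From mathcomp Require Import ring lra zify.
Import Order.TTheory GRing.Theory Num.Theory.
Set Implicit Arguments. Unset Strict Implicit. Unset Printing Implicit Defensive.
Local Open Scope ring_scope.

Lemma sqr_sum_le (R : realDomainType) (m : nat) (y : 'I_m -> R) :
  (\sum_k y k) ^+ 2 <= (\sum_k y k ^+ 2) *+ m.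
Proof.
set Y := \sum_k y k; set S := \sum_k y k ^+ 2.
have inner k : \sum_l (y k - y l) ^+ 2 = y k ^+ 2 *+ m - (y k * Y) *+ 2 + S.
  under eq_bigr do rewrite sqrrB.
  by rewrite !big_split /= sumrN sumr_const card_ord sumrMnl -mulr_sumr.
have : 0 <= \sum_k \sum_l (y k - y l) ^+ 2.
  by do 2!apply: sumr_ge0 => ? _; apply: sqr_ge0.
under eq_bigr do rewrite inner.
rewrite !big_split /= sumrN sumr_const card_ord !sumrMnl -mulr_suml -/S -expr2.
by rewrite addrAC -mulr2n -mulrnBl pmulrn_lge0 // subr_ge0.
Qed.

Lemma card_lt_mul_le_sum (R : numDomainType) (T : finType) (f : T -> R) (a : R) :
  (forall t, 0 <= f t) -> #|[set t | a < f t]|%:R * a <= \sum_t f t.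
Proof.
move=> f_ge0; rewrite mulr_natl -sumr_const.
rewrite [X in _ <= X](bigID [in [set t | a < f t]]) /= -[X in X <= _]addr0.
by apply: lerD; [apply: ler_sum => t /[!inE] /ltW | apply: sumr_ge0].
Qed.

Lemma exists_card_superset (T : finType) (A : {set T}) (k : nat) :
  (#|A| <= k <= #|T|)%N -> exists2 B : {set T}, A \subset B & #|B| = k.
Proof.
case/andP=> A_le_k k_le_T.
have : (k - #|A| <= #|~: A|)%N by have := cardsC A; lia.
case/card_geqP=> s [s_uniq s_size sA].
exists (A :|: [set x in s]); first exact: subsetUl.
rewrite cardsU (_ : A :&: _ = set0) ?cards0 ?subn0; last first.
  by apply/setP=> x; rewrite !inE; apply/negP => /andP[xA /sA]; rewrite inE xA.
by rewrite cardsE (card_uniqP s_uniq) s_size subnKC.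
Qed.

Lemma bin_fact_le_expn (n r : nat) : ('C(n, r) * r`! <= n ^ r)%N.
Proof.
rewrite bin_ffact ffact_prod -[X in (_ <= _ ^ X)%N]card_ord -prod_nat_const.
by apply: leq_prod => i _; apply: leq_subr.
Qed.

Definition rsets_containing (n r : nat) (G : {set {ffun 'I_r -> 'I_n}}) :=
  [set S : {set 'I_n} | (#|S| == r) && [exists t in G, t \in ffun_on S]].

Lemma card_le_rsets_containing (n r : nat) (G : {set {ffun 'I_r -> 'I_n}}) :
  (r <= n)%N -> (#|G| <= #|rsets_containing G| * r ^ r)%N.
Proof.
move=> r_le_n; set F := rsets_containing G.
have covered t : t \in G -> exists2 S, S \in F & t \in ffun_on S.
  move=> tG; have [|S range_sub cardS] := @exists_card_superset _ [set t k | k in 'I_r] r.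
    by rewrite card_ord r_le_n andbT -[X in (_ <= X)%N]card_ord leq_imset_card.
  have tS : t \in ffun_on S.
    by apply/ffun_onP => k; apply: (subsetP range_sub); apply: imset_f.
  by exists S; rewrite // inE cardS eqxx; apply/existsP; exists t; rewrite tG.
apply: (@leq_trans (\sum_(t in G) \sum_(S in F) (t \in ffun_on S : nat))).
  rewrite -sum1_card; apply: leq_sum => t /covered[S FS tS].
  by rewrite (bigD1 S) //= tS leq_addr.
rewrite exchange_big -sum_nat_const; apply: leq_sum => S /[!inE] /andP[/eqP cardS _].
have -> : (r ^ r = #|S| ^ #|'I_r|)%N by rewrite cardS card_ord.
rewrite -card_ffun_on -sum1_card big_mkcond [X in (_ <= X)%N]big_mkcond /=.
by apply: leq_sum => t _; case: (t \in G); case: (t \in ffun_on S).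
Qed.

Section SumOverMaps.
Variables (R : comPzRingType) (n r : nat).
Local Notation maps := {ffun 'I_r -> 'I_n}.

Lemma sum_ffun_at (k : 'I_r) (g : 'I_n -> R) :
  \sum_(t : maps) g (t k) = (\sum_i g i) *+ n ^ r.-1.
Proof.
have := @bigA_distr_bigA R 0 1 *%R +%R _ _
  (fun (k' : 'I_r) (j : 'I_n) => if k' == k then g j else 1).
rewrite (bigD1 k) //= eqxx.
under [\prod_(_ | _) _]eq_bigr => k' /negbTE-> do rewrite sumr_const card_ord.
rewrite prodr_const cardC1 card_ord -natrX mulr_natr => ->.
apply: eq_bigr => t _.
by rewrite (bigD1 k) //= eqxx big1 ?mulr1 // => k' /negbTE->.
Qed.

Lemma sum_ffun_mul_at_eq0 (k l : 'I_r) (x y : 'I_n -> R) :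
  k != l -> \sum_i x i = 0 -> \sum_(t : maps) x (t k) * y (t l) = 0.
Proof.
move=> neq_kl x_sum0.
have := @bigA_distr_bigA R 0 1 *%R +%R _ _
  (fun (k' : 'I_r) (j : 'I_n) => if k' == k then x j else if k' == l then y j else 1).
rewrite (bigD1 k) //= eqxx x_sum0 mul0r => /esym prod_eq0.
rewrite -[RHS]prod_eq0; apply: eq_bigr => t _.
rewrite (bigD1 k) //= eqxx (bigD1 l) 1?eq_sym //= (negbTE neq_kl) eqxx.
by rewrite big1 ?mulr1 // => k' /andP[/negbTE-> /negbTE->].
Qed.

Lemma sum_ffun_sqr_sum (x : 'I_n -> R) : \sum_i x i = 0 ->
  \sum_(t : maps) (\sum_k x (t k)) ^+ 2 = (\sum_i x i ^+ 2) *+ (r * n ^ r.-1).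
Proof.
move=> x_sum0.
under eq_bigr do rewrite expr2 mulr_suml; under eq_bigr do under eq_bigr do rewrite mulr_sumr.
rewrite exchange_big /=.
under eq_bigr => k _.
  rewrite exchange_big (bigD1 k) //= [X in _ + X]big1 => [|l neq_lk]; last first.
    by apply: sum_ffun_mul_at_eq0; rewrite // eq_sym.
  rewrite addr0 (eq_bigr (fun t : maps => x (t k) ^+ 2)) => [|t _]; last by rewrite expr2.
  rewrite (sum_ffun_at k (fun i => x i ^+ 2)).
  over.
by rewrite sumr_const card_ord -mulrnA mulnC.
Qed.

End SumOverMaps.

Section SquaredNorm.
Variables (R : realType) (d : nat).
Implicit Types (u v : 'rV[R]_d).

Definition sqnorm v : R := \sum_(i < d) v 0 i ^+ 2.

Lemma sqnorm_ge0 v : 0 <= sqnorm v.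
Proof. by apply: sumr_ge0 => i _; apply: sqr_ge0. Qed.

Lemma sqnormZ (a : R) v : sqnorm (a *: v) = a ^+ 2 * sqnorm v.
Proof. by rewrite /sqnorm mulr_sumr; apply: eq_bigr => i _; rewrite mxE exprMn. Qed.

Lemma sqnorm_sum_le (m : nat) (v : 'I_m -> 'rV[R]_d) :
  sqnorm (\sum_k v k) <= (\sum_k sqnorm (v k)) *+ m.
Proof.
rewrite /sqnorm exchange_big -sumrMnl; apply: ler_sum => i _.
by rewrite summxE; apply: sqr_sum_le.
Qed.

Lemma sum_ffun_sqnorm_sum (n r : nat) (v : 'I_n -> 'rV[R]_d) : \sum_i v i = 0 ->
  \sum_(t : {ffun 'I_r -> 'I_n}) sqnorm (\sum_k v (t k))
    = (\sum_i sqnorm (v i)) *+ (r * n ^ r.-1).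
Proof.
move=> v_sum0; rewrite /sqnorm exchange_big [in RHS]exchange_big -sumrMnl /=.
apply: eq_bigr => j _; under eq_bigr do rewrite summxE.
by apply: sum_ffun_sqr_sum; rewrite -summxE v_sum0 mxE.
Qed.

Lemma edist_le_sqnorm u v (rho : R) :
  0 <= rho -> (edist u v <= rho) = (sqnorm (u - v) <= rho ^+ 2).
Proof. by move=> rho_ge0; rewrite -[RHS]ler_sqrt ?sqr_ge0 // sqrtr_sqr ger0_norm. Qed.

Lemma diam_ge0 (n : nat) (P : 'I_n -> 'rV[R]_d) : 0 <= diam P.
Proof. exact: bigmax_ge_id. Qed.

Lemma sqnorm_le_diam (n : nat) (P : 'I_n -> 'rV[R]_d) i j :
  sqnorm (P i - P j) <= diam P ^+ 2.
Proof.
rewrite -edist_le_sqnorm ?diam_ge0 //.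
exact: le_trans (le_bigmax _ _ j) (le_bigmax _ _ i).
Qed.

End SquaredNorm.

Section Centroid.
Variables (R : realType) (d : nat).

Definition centroid (m : nat) (v : 'I_m -> 'rV[R]_d) := m%:R^-1 *: \sum_k v k.

Lemma centroidB (m : nat) (v w : 'I_m -> 'rV[R]_d) :
  centroid (fun k => v k - w k) = centroid v - centroid w.
Proof. by rewrite /centroid sumrB scalerBr. Qed.

Lemma centroid_cst (m : nat) (v : 'rV[R]_d) : (0 < m)%N -> centroid (fun _ : 'I_m => v) = v.
Proof.
move=> m_gt0; rewrite /centroid sumr_const card_ord -scaler_nat scalerA.
by rewrite mulVf ?scale1r ?pnatr_eq0 -?lt0n.
Qed.

Lemma sqnorm_centroid_le (m : nat) (v : 'I_m -> 'rV[R]_d) (B : R) : (0 < m)%N ->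
  (forall k, sqnorm (v k) <= B) -> sqnorm (centroid v) <= B.
Proof.
move=> m_gt0 v_le; have m_pos : (0 : R) < m%:R by rewrite ltr0n.
rewrite sqnormZ exprVn ler_pdivrMl ?exprn_gt0 //.
apply: le_trans (sqnorm_sum_le v) _.
rewrite expr2 -mulrA !mulr_natl lerMn2r -[X in B *+ X]card_ord -sumr_const.
by rewrite ler_sum ?orbT.
Qed.

Lemma centroid_in_conv_hull (n m : nat) (P : 'I_n -> 'rV[R]_d)
    (S : {set 'I_n}) (t : 'I_m -> 'I_n) :
  (0 < m)%N -> (forall k, t k \in S) -> in_conv_hull P S (centroid (fun k => P (t k))).
Proof.
move=> m_gt0 tS.
pose mult i := #|[set k | t k == i]|.
have sum_mult (V : zmodType) (f : 'I_n -> V) : \sum_k f (t k) = \sum_i f i *+ mult i.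
  rewrite (partition_big t predT) //=; apply: eq_bigr => i _.
  by rewrite -sumr_const; apply: eq_big => [k|k /eqP ->]; rewrite ?inE.
exists (fun i => (mult i)%:R / m%:R); split.
- by move=> i; rewrite divr_ge0 ?ler0n.
- move=> i iNS; suff -> : mult i = 0%N by rewrite mul0r.
  apply/eqP; rewrite cards_eq0; apply/eqP/setP => k; rewrite !inE.
  by apply: contraNF iNS => /eqP <-.
- rewrite -mulr_suml -[X in X / _](sum_mult R (fun _ => 1)).
  by rewrite sumr_const card_ord mulfV ?pnatr_eq0 -?lt0n.
- rewrite /centroid sum_mult scaler_sumr; apply: eq_bigr => i _.
  by rewrite -scaler_nat scalerA mulrC.
Qed.

End Centroid.

Section TupleCentroids.
Variables (R : realType) (d n r : nat) (P : 'I_n -> 'rV[R]_d).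
Hypotheses (r_gt0 : (0 < r)%N) (n_gt0 : (0 < n)%N).
Local Notation D := (diam P).
Local Notation mu := (centroid P).

Definition tuple_centroid (t : {ffun 'I_r -> 'I_n}) := centroid (fun k => P (t k)).

Definition near_tuples (rho : R) :=
  [set t : {ffun 'I_r -> 'I_n} | edist (tuple_centroid t) mu <= rho].

Lemma sqnorm_sub_centroid_le i : sqnorm (P i - mu) <= D ^+ 2.
Proof.
rewrite -[P i](centroid_cst _ n_gt0) -centroidB.
by apply: sqnorm_centroid_le => // j; apply: sqnorm_le_diam.
Qed.

Lemma tuple_centroidE t :
  tuple_centroid t - mu = r%:R^-1 *: \sum_k (P (t k) - mu).
Proof. by rewrite -[mu in LHS](centroid_cst _ r_gt0) -centroidB. Qed.

Lemma sqnorm_tuple_centroid_le t : sqnorm (tuple_centroid t - mu) <= D ^+ 2.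
Proof.
rewrite -[mu](centroid_cst _ r_gt0) -centroidB.
by apply: sqnorm_centroid_le => // k; apply: sqnorm_sub_centroid_le.
Qed.

Lemma sum_sqnorm_tuple_centroid_le :
  \sum_t sqnorm (tuple_centroid t - mu) <= n%:R ^+ r * (D ^+ 2 / r%:R).
Proof.
have sum_dev0 : \sum_i (P i - mu) = 0.
  rewrite sumrB sumr_const card_ord -scaler_nat scalerA.
  by rewrite mulfV ?pnatr_eq0 -?lt0n // scale1r subrr.
have sum_dev_le : \sum_i sqnorm (P i - mu) <= D ^+ 2 *+ n.
  rewrite -[X in _ *+ X]card_ord -sumr_const.
  by apply: ler_sum => i _; apply: sqnorm_sub_centroid_le.
under eq_bigr do rewrite tuple_centroidE sqnormZ.
rewrite -mulr_sumr (sum_ffun_sqnorm_sum r sum_dev0).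
apply: (@le_trans _ _ (r%:R^-1 ^+ 2 * ((D ^+ 2 *+ n) *+ (r * n ^ r.-1)))).
  apply: ler_wpM2l; first by rewrite exprn_ge0 ?invr_ge0 ?ler0n.
  by rewrite lerMn2r sum_dev_le orbT.
rewrite -mulrnA -[D ^+ 2 *+ _]mulr_natr !natrM natrX.
have -> : n%:R ^+ r = n%:R * n%:R ^+ r.-1 :> R by rewrite -exprS prednK.
by rewrite le_eqVlt; apply/orP; left; apply/eqP; field; rewrite pnatr_eq0 -lt0n.
Qed.

Lemma card_far_tuples_le (rho : R) : 0 <= rho ->
  #|~: near_tuples rho|%:R * rho ^+ 2 <= n%:R ^+ r * (D ^+ 2 / r%:R).
Proof.
move=> rho_ge0.
have -> : ~: near_tuples rho = [set t | rho ^+ 2 < sqnorm (tuple_centroid t - mu)].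
  by apply/setP => t; rewrite in_setC !inE edist_le_sqnorm // ltNge.
apply: le_trans sum_sqnorm_tuple_centroid_le.
exact: card_lt_mul_le_sum (fun t => sqnorm_ge0 (tuple_centroid t - mu)).
Qed.

Lemma bin_le_card_near_tuples (c : R) : Num.sqrt 2 <= c ->
  ('C(n, r) <= #|near_tuples (c * D / Num.sqrt r%:R)|)%N.
Proof.
move=> c_ge; set rho := _ / _; set near := near_tuples rho.
have c_ge0 : 0 <= c := le_trans (sqrtr_ge0 2) c_ge.
have c2_ge2 : 2 <= c ^+ 2.
  by rewrite -[2](@sqr_sqrtr _ 2) ?ler0n // lerXn2r // nnegrE sqrtr_ge0.
have rho_ge0 : 0 <= rho by rewrite divr_ge0 ?sqrtr_ge0 ?mulr_ge0 ?diam_ge0.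
have rho2 : rho ^+ 2 = c ^+ 2 * (D ^+ 2 / r%:R).
  by rewrite expr_div_n sqr_sqrtr ?ler0n // exprMn mulrA.
have binC := bin_fact_le_expn n r.
have [D_le_rho | rho_lt_D] := lerP (D ^+ 2) (rho ^+ 2).
  suff -> : near = setT.
    by rewrite cardsT card_ffun !card_ord (leq_trans _ binC) // leq_pmulr ?fact_gt0.
  apply/setP => t; rewrite !inE edist_le_sqnorm //.
  exact: le_trans (sqnorm_tuple_centroid_le t) D_le_rho.
have r_gt1 : (1 < r)%N.
  rewrite ltn_neqAle r_gt0 andbT; apply/eqP => r1.
  move: rho_lt_D; rewrite rho2 -r1 divr1; have := sqr_ge0 D; nra.
have K_gt0 : 0 < D ^+ 2 / r%:R.
  by rewrite divr_gt0 ?ltr0n // (le_lt_trans _ rho_lt_D) ?sqr_ge0.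
have far_le : (#|~: near| * 2 <= n ^ r)%N.
  have := card_far_tuples_le rho_ge0.
  rewrite rho2 (mulrA _ (c ^+ 2)) ler_pM2r // => far_c2.
  rewrite -(ler_nat R) natrM natrX; apply: le_trans far_c2.
  by apply: ler_wpM2l; rewrite ?ler0n.
have card_near_far : (#|near| + #|~: near| = n ^ r)%N.
  by rewrite cardsC card_ffun !card_ord.
have bin2 : ('C(n, r) * 2 <= n ^ r)%N.
  by apply: leq_trans binC; rewrite leq_mul2l (leq_trans r_gt1 (fact_geq r)) orbT.
lia.
Qed.

End TupleCentroids.

Theorem theorem7p2 (R : realType) (d n : nat) (P : 'I_n -> 'rV[R]_d)
  (HP : injective P) (r : nat) (Hr1 : (1 <= r)%N) (Hrn : (r <= n)%N) :
  exists q : 'rV[R]_d,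
    exists F : {set {set 'I_n}},
      (forall S, S \in F ->
         #|S| = r /\
         exists x, in_conv_hull P S x /\ cball q (7 / 2 * diam P / Num.sqrt (r%:R : R)) x) /\
      (r%:R : R) ^- r * ('C(n, r))%:R <= (#|F|)%:R.
Proof.
have n_gt0 : (0 < n)%N := leq_trans Hr1 Hrn.
set near := near_tuples r P (7 / 2 * diam P / Num.sqrt (r%:R : R)).
exists (centroid P), (rsets_containing near); split.
  move=> S /[!inE] /andP[/eqP cardS /existsP[t /andP[t_near /ffun_onP tS]]].
  split=> //; exists (tuple_centroid P t); split; first exact: centroid_in_conv_hull.
  by move: t_near; rewrite inE.
have sqrt2_le : Num.sqrt 2 <= 7 / 2 :> R.
  by rewrite -[X in _ <= X]ger0_norm -?sqrtr_sqr ?ler_sqrt //; lra.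
have := leq_trans (bin_le_card_near_tuples P Hr1 n_gt0 sqrt2_le)
  (card_le_rsets_containing near Hrn).
rewrite -(ler_nat R) natrM natrX => bin_le.
by rewrite mulrC ler_pdivrMr ?exprn_gt0 ?ltr0n.
Qed.
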